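(* Let $R$ be a ring with unity and involution $*$, let $a\in R$ and let $m$ be a nonnegative integer. Then $a$ is left dual pseudo core invertible if and only if $a^k$ is left dual $a^m$-core invertible for some positive integer $k$. In this case, if $x$ is a left dual $a^m$-core inverse of $a^k$, then $xa^{k+m-1}$ is a left dual pseudo core inverse of $a$; and if $y\in R$ satisfies $a^kya=a^k$, $(ya)^*=ya$ and $y^2a=y$, then $y^{k+m}$ is a left dual $a^m$-core inverse of $a^k$.
   Context: Here $a^0=1$. An element $a$ is left dual pseudo core invertible if there exist $y\in R$ and a positive integer $k$ such that $a^kya=a^k$, $(ya)^*=ya$ and $y^2a=y$; such $y$ is a left dual pseudo core inverse of $a$. For $u,v\in R$, $u$ is left dual $v$-core invertible if there exists $x\in R$ with $uxvu=u$, $(xvu)^*=xvu$ and $x^2vu=x$; such $x$ is a left dual $v$-core inverse of $u$. *)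

From mathcomp Require Import all_boot all_algebra.
Set Implicit Arguments. Unset Strict Implicit. Unset Printing Implicit Defensive.
Import GRing.Theory.
Local Open Scope ring_scope.

Definition involution (R : pzRingType) (star : R -> R) : Prop :=
  [/\ (forall x y : R, star (x + y) = star x + star y),
      (forall x y : R, star (x * y) = star y * star x)
    & (forall x : R, star (star x) = x)].

Definition is_ldpc_inverse_k (R : pzRingType) (star : R -> R) (a y : R) (k : nat) : Prop :=
  [/\ a ^+ k * y * a = a ^+ k, star (y * a) = y * a & y ^+ 2 * a = y].

Definition is_ldpc_inverse (R : pzRingType) (star : R -> R) (a y : R) : Prop :=
  exists2 k : nat, (0 < k)%N & is_ldpc_inverse_k star a y k.

Definition ldpc_invertible (R : pzRingType) (star : R -> R) (a : R) : Prop :=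
  exists y : R, is_ldpc_inverse star a y.

Definition is_ldvc_inverse (R : pzRingType) (star : R -> R) (u v x : R) : Prop :=
  [/\ u * x * v * u = u, star (x * v * u) = x * v * u & x ^+ 2 * v * u = x].

Definition ldvc_invertible (R : pzRingType) (star : R -> R) (u v : R) : Prop :=
  exists x : R, is_ldvc_inverse star u v x.

From mathcomp Require Import all_boot all_algebra.
Import GRing.Theory.
Local Open Scope ring_scope.

(* Both notions are governed by a single element of the form [z * a]: for a
   left dual v-core inverse [x] of [u] it is [x * v * u], for a left dual
   pseudo core inverse [y] of [a] it is [y * a].  With [u = a^k] and [v = a^m]
   these two elements coincide for the proposed witnesses, so the
   self-adjointness conditions transfer verbatim and only the two absorption identities need proofs. *)

Section PowersOfLeftAbsorbing.

Variables (R : pzRingType) (y a : R).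
Hypothesis yya : y ^+ 2 * a = y.

Lemma exprSS_mulr n : y ^+ n.+2 * a = y ^+ n.+1.
Proof. by rewrite -addn2 exprD -mulrA yya -exprSr. Qed.

Lemma exprS_mulr_exprS n : y ^+ n.+1 * a ^+ n.+1 = y * a.
Proof.
elim: n => [|n IHn]; first by rewrite !expr1.
by rewrite [a ^+ n.+2]exprS mulrA exprSS_mulr IHn.
Qed.

End PowersOfLeftAbsorbing.

Section LeftDualCoreTransfer.

Variables (R : pzRingType) (star : R -> R).

Lemma ldvc_inverse_of_factor (a u v x y : R) :
  x * v * u = y * a -> u * y * a = u -> star (y * a) = y * a ->
  x * y * a = x -> is_ldvc_inverse star u v x.
Proof.
move=> xvu_ya uya sa xya; split; rewrite ?xvu_ya //.
- by rewrite -[u * x * v * u]mulrA -!mulrA [x * _]mulrA xvu_ya mulrA uya.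
- by rewrite expr2 -!mulrA [x * (v * u)]mulrA xvu_ya mulrA xya.
Qed.

(* [x * b] absorbs [a] because [x] absorbs [v * u = b * a] and [b] commutes
   with [v * u], which lets [b] slide past the factor [x * v * u]. *)
Lemma ldpc_inverse_of_factor (a b u v x : R) :
  b * a = v * u -> b * (v * u) = v * u * b -> is_ldvc_inverse star u v x ->
  [/\ u * (x * b) * a = u, star (x * b * a) = x * b * a
    & (x * b) ^+ 2 * a = x * b].
Proof.
move=> ba_vu b_vu [uxvu s_xvu xxvu].
have xba : x * b * a = x * v * u by rewrite -mulrA ba_vu !mulrA.
split.
- by rewrite -mulrA xba !mulrA uxvu.
- by rewrite xba s_xvu.
have -> : (x * b) ^+ 2 * a = x ^+ 2 * (v * u * b) * (x * v * u).
  by rewrite expr2 -mulrA xba -{1}xxvu !mulrA.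
rewrite -b_vu.
transitivity (x ^+ 2 * b * v * (u * x * v * u)); first by rewrite !mulrA.
by rewrite uxvu -mulrA -mulrA b_vu !mulrA xxvu.
Qed.

Lemma ldpc_inverse_of_ldvc_expr (a x : R) (k m : nat) : (0 < k)%N ->
  is_ldvc_inverse star (a ^+ k) (a ^+ m) x ->
  is_ldpc_inverse_k star a (x * a ^+ (k + m - 1)) k.
Proof.
case: k => // k _; rewrite addSn subn1 /=.
rewrite /is_ldpc_inverse_k; apply: (@ldpc_inverse_of_factor a _ _ (a ^+ m)).
  by rewrite -exprSr -exprD addnS addnC.
by rewrite -!exprD addnC.
Qed.

Lemma ldvc_inverse_of_ldpc_expr (a y : R) (k m : nat) : (0 < k)%N ->
  is_ldpc_inverse_k star a y k ->
  is_ldvc_inverse star (a ^+ k) (a ^+ m) (y ^+ (k + m)).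
Proof.
case: k => // k _ [aya sya yya]; rewrite addSn.
apply: (@ldvc_inverse_of_factor a _ _ _ y) => //.
  by rewrite -mulrA -exprD addnS addnC exprS_mulr_exprS.
by rewrite -exprSr exprSS_mulr.
Qed.

End LeftDualCoreTransfer.

Theorem proposition3p4 (R : pzRingType) (star : R -> R) (a : R) (m : nat) :
  involution star ->
  (ldpc_invertible star a <->
     exists2 k : nat, (0 < k)%N & ldvc_invertible star (a ^+ k) (a ^+ m))
  /\ (forall (k : nat) (x : R), (0 < k)%N ->
        is_ldvc_inverse star (a ^+ k) (a ^+ m) x ->
        is_ldpc_inverse star a (x * a ^+ (k + m - 1)))
  /\ (forall (k : nat) (y : R), (0 < k)%N ->
        is_ldpc_inverse_k star a y k ->
        is_ldvc_inverse star (a ^+ k) (a ^+ m) (y ^+ (k + m))).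
Proof.
move=> _.
have ldpc_of_ldvc k x : (0 < k)%N -> is_ldvc_inverse star (a ^+ k) (a ^+ m) x ->
    is_ldpc_inverse star a (x * a ^+ (k + m - 1)).
  by move=> k_gt0 x_inv; exists k => //; apply: ldpc_inverse_of_ldvc_expr.
split; [split | split].
- case=> y [k k_gt0 y_inv]; exists k => //; exists (y ^+ (k + m)).
  exact: ldvc_inverse_of_ldpc_expr.
- case=> k k_gt0 [x x_inv]; exists (x * a ^+ (k + m - 1)).
  exact: ldpc_of_ldvc x_inv.
- exact: ldpc_of_ldvc.
- move=> k y; exact: ldvc_inverse_of_ldpc_expr.
Qed.
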